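(* Let $G=(V,E)$ be a connected simple graph which contains a cycle, and suppose that the shortest cycle in $G$ has even length. Then the path metric $\partial$ on $V$ is not conditionally strictly negative definite.
   Context: The path metric $\partial(x,y)$ is the length of a shortest path between vertices $x,y$. A symmetric real function $K$ on $V\times V$ is conditionally strictly negative definite if for every finitely supported $\lambda\colon V\to\mathbb{C}$, $\lambda\neq0$, with $\sum_v\lambda(v)=0$ one has $\sum_{x,y}\lambda(x)\overline{\lambda(y)}K(x,y)<0$. *)

From HB Require Import structures.
From mathcomp Require Import all_boot all_order all_algebra.
From mathcomp Require Import complex.
From mathcomp Require Import Rstruct.
Set Implicit Arguments. Unset Strict Implicit. Unset Printing Implicit Defensive.
Import Order.TTheory GRing.Theory Num.Theory.
Local Open Scope ring_scope.

Notation CC := (complex Rdefinitions.R).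

Definition simple_graph (V : eqType) (adj : rel V) : Prop :=
  symmetric adj /\ irreflexive adj.

(* a walk from x to y of length n: x :: p with path adj x p, last = y *)
Definition walk (V : eqType) (adj : rel V) (x y : V) (p : seq V) : Prop :=
  path adj x p /\ last x p = y.

Definition connected_graph (V : eqType) (adj : rel V) : Prop :=
  forall x y : V, exists p, walk adj x y p.

Definition is_graph_cycle (V : eqType) (adj : rel V) (c : seq V) : Prop :=
  [/\ (3 <= size c)%N, uniq c & cycle adj c].

Definition is_path_metric (V : eqType) (adj : rel V) (d : V -> V -> nat) : Prop :=
  forall x y : V,
    (exists p, walk adj x y p /\ size p = d x y) /\
    (forall p, walk adj x y p -> (d x y <= size p)%N).

Definition cond_strict_neg_def (V : eqType) (K : V -> V -> CC) : Prop :=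
  forall (S : seq V) (lam : V -> CC),
    uniq S ->
    (forall v, v \notin S -> lam v = 0) ->
    (exists v, lam v != 0) ->
    \sum_(v <- S) lam v = 0 ->
    \sum_(x <- S) \sum_(y <- S) lam x * (lam y)^* * K x y < 0.

From HB Require Import structures.
From mathcomp Require Import all_boot all_order all_algebra.
From mathcomp Require Import complex Rstruct zify ring.
Import Order.TTheory GRing.Theory Num.Theory.
Set Implicit Arguments. Unset Strict Implicit. Unset Printing Implicit Defensive.

(* Let c_0, ..., c_{2k-1} be a shortest cycle.  Vertices at distance t <= k along
   it are at distance exactly t in the graph, since a shortcut would close a
   shorter cycle.  For the weights 1, -1, 1, -1 on c_0, c_1, c_k, c_{k+1} the
   quadratic form is 2 (d(c_0,c_k) + d(c_1,c_{k+1}) - d(c_0,c_1) - d(c_1,c_k)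
   - d(c_k,c_{k+1}) - d(c_{k+1},c_0)) >= 2 (2k - 1 - (k-1) - 1 - (k-1)) = 0. *)

Section IndexedWalks.

Variables (V : eqType) (adj : rel V).

Definition iwalk (f : nat -> V) (L : nat) : Prop :=
  forall i, i < L -> adj (f i) (f i.+1).

Definition nonbacktracking (f : nat -> V) (L : nat) : Prop :=
  forall i, i.+2 <= L -> f i.+2 != f i.

Definition concat_at (f g : nat -> V) (m i : nat) : V :=
  if i < m then f i else g (i - m).

Lemma iwalk_concat f g m t :
  iwalk f m -> iwalk g t -> f m = g 0 -> iwalk (concat_at f g m) (m + t).
Proof.
move=> fw gw fg i it; rewrite /concat_at.
case: (ltngtP i.+1 m) => im.
- by apply: fw; apply: ltnW.
- by rewrite subSn //; apply: gw; lia.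
- by rewrite -im subnn -fg -im; apply: fw; rewrite im.
Qed.

Lemma nonbacktracking_concat f g m t :
  nonbacktracking f m -> nonbacktracking g t -> f m = g 0 ->
  (0 < m -> 0 < t -> g 1 != f m.-1) ->
  nonbacktracking (concat_at f g m) (m + t).
Proof.
move=> fnb gnb fg junc i it; rewrite /concat_at.
case: (ltngtP i.+2 m) => im.
- by rewrite (ltn_trans _ im) //; apply: fnb; apply: ltnW.
- case: (ltnP i m) => im'.
  + have -> : i.+2 - m = 1 by lia.
    have -> : i = m.-1 by lia.
    by apply: junc; lia.
  + have -> : i.+2 - m = (i - m).+2 by lia.
    by apply: gnb; lia.
- by rewrite -im ltnW // subnn -fg -im; apply: fnb; rewrite im.
Qed.

Hypothesis adj_irr : irreflexive adj.

Lemma uniq_closed_iwalk_cycle w D :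
  3 <= D -> iwalk w D -> w D = w 0 -> uniq (mkseq w D) ->
  is_graph_cycle adj (mkseq w D).
Proof.
move=> D3 ww wD wu; split; rewrite ?size_mkseq //.
have D0 : 0 < D by apply: leq_trans D3.
have lastE : last (w 0) (mkseq w D) = w D.-1.
  by rewrite -nth_last size_mkseq nth_mkseq // ltn_predL.
rewrite (cycle_path (w 0)) lastE; apply/(pathP (w 0)) => i; rewrite size_mkseq.
case: i => [|i] iD /=.
- by rewrite nth_mkseq // -wD; have := ww D.-1; rewrite prednK //; apply; lia.
- by rewrite !nth_mkseq ?(ltnW iD) //; apply: ww; apply: ltnW.
Qed.

Lemma closed_iwalk_cycle D w :
  3 <= D -> iwalk w D -> w D = w 0 -> nonbacktracking w D ->
  exists2 c, is_graph_cycle adj c & size c <= D.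
Proof.
elim/ltn_ind: D w => D IH w D3 ww wD wnb.
have [wu | /(uniqPn (w 0))[i [j]]] := boolP (uniq (mkseq w D)).
  by exists (mkseq w D); [apply: uniq_closed_iwalk_cycle | rewrite size_mkseq].
rewrite size_mkseq => -[ij jD]; rewrite !nth_mkseq ?(ltn_trans ij) // => wij.
have DjiD : j - i < D by lia.
have [||||c cyc_c size_c] := IH (j - i) DjiD (fun k => w (i + k)).
- rewrite ltnNge; apply/negP => small.
  have [ej | ej] : j = i.+1 \/ j = i.+2 by lia.
  + by have := ww i (ltn_trans ij jD); rewrite -ej -wij adj_irr.
  + by have := wnb i; rewrite -ej -wij eqxx; move/(_ (ltnW jD)).
- by move=> k kD; rewrite addnS; apply: ww; lia.
- by rewrite addn0 subnKC ?(ltnW ij).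
- by move=> k kD; rewrite !addnS; apply: wnb; lia.
by exists c => //; apply: leq_trans size_c (ltnW DjiD).
Qed.

End IndexedWalks.

Section PathMetric.

Variables (V : eqType) (adj : rel V) (d : V -> V -> nat).
Hypothesis dP : is_path_metric adj d.

Lemma path_metric_le f L : iwalk adj f L -> d (f 0) (f L) <= L.
Proof.
move=> fw; have := (dP (f 0) (f L)).2 (mkseq (fun i => f i.+1) L).
rewrite size_mkseq; apply.
have nthE i : i <= L -> nth (f 0) (f 0 :: mkseq (fun i => f i.+1) L) i = f i.
  by case: i => [|i] //= iL; rewrite nth_mkseq.
split; last by rewrite (last_nth (f 0)) size_mkseq nthE.
apply/(pathP (f 0)) => i; rewrite size_mkseq => iL.
by rewrite nthE ?(ltnW iL) // nth_mkseq //; apply: fw.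
Qed.

Lemma path_metric_geodesic x y :
  exists f, [/\ f 0 = x, f (d x y) = y & iwalk adj f (d x y)].
Proof.
have [[p [[pw plast] psize]] _] := dP x y.
exists (nth x (x :: p)); split => //; first by rewrite -psize -last_nth.
by move=> i; rewrite -psize => ip; apply: (pathP x pw).
Qed.

Lemma path_metric_xx x : d x x = 0.
Proof. by apply/eqP; rewrite -leqn0; apply: (@path_metric_le (fun=> x) 0). Qed.

Lemma geodesic_nonbacktracking f L :
  iwalk adj f L -> d (f 0) (f L) = L -> nonbacktracking f L.
Proof.
move=> fw fL i iL; apply/negP => /eqP fii.
pose g := concat_at f (fun k => f (k + i.+2)) i.
have gw : iwalk adj g (i + (L - i.+2)).
  apply: iwalk_concat => [k ki | k kL | ]; last by rewrite fii.
  - by apply: fw; lia.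
  - by rewrite addSn; apply: fw; lia.
have g0 : g 0 = f 0 by rewrite /g /concat_at; case: i fii {iL g gw} => //= ->.
have gL : g (i + (L - i.+2)) = f L.
  by rewrite /g /concat_at ltnNge leq_addr /=; congr f; lia.
by have := path_metric_le gw; rewrite g0 gL fL; lia.
Qed.

Hypothesis adj_sym : symmetric adj.

Lemma path_metric_sym x y : d x y = d y x.
Proof.
suff le_d u v : d u v <= d v u by apply/eqP; rewrite eqn_leq !le_d.
have [f [f0 fL fw]] := path_metric_geodesic v u.
have := @path_metric_le (fun i => f (d v u - i)) (d v u).
rewrite subn0 subnn f0 fL; apply => i iL.
by rewrite adj_sym -(subnSK iL); apply: fw; rewrite (subnSK iL) leq_subr.
Qed.

End PathMetric.

Section CycleVertices.

Variables (V : eqType) (adj : rel V) (c : seq V) (x0 : V).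

Definition cycle_vertex (a : nat) : V := nth x0 c (a %% size c).

Local Notation C := cycle_vertex.

Hypothesis c_cycle : is_graph_cycle adj c.

Let size_c_gt2 : 2 < size c. Proof. by case: c_cycle. Qed.
Let size_c_gt0 : 0 < size c. Proof. exact: ltnW (ltnW size_c_gt2). Qed.
Let c_uniq : uniq c. Proof. by case: c_cycle. Qed.

Lemma cycle_vertex_size : C (size c) = C 0.
Proof. by rewrite /C modnn mod0n. Qed.

Lemma cycle_vertex_adj a : adj (C a) (C a.+1).
Proof.
have /(pathP x0) c_path : path adj (last x0 c) c.
  by rewrite -cycle_path; case: c_cycle.
rewrite /C -addn1 -modnDml addn1.
have := ltn_pmod a size_c_gt0; set r := a %% size c => rn.
case: (ltnP r.+1 (size c)) => rn'; first by rewrite modn_small //; exact: (c_path r.+1 rn').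
have r1 : r.+1 = size c by apply/eqP; rewrite eqn_leq rn rn'.
by rewrite r1 modnn; have := c_path 0 size_c_gt0; rewrite /= -nth_last -r1.
Qed.

Lemma cycle_vertex_iwalk a t : iwalk adj (fun i => C (a + i)) t.
Proof. by move=> i _; rewrite addnS; apply: cycle_vertex_adj. Qed.

Lemma cycle_vertex_eq i j :
  i < size c -> j < size c -> (C i == C j) = (i == j).
Proof. by move=> ic jc; rewrite /C !modn_small // nth_uniq. Qed.

Lemma cycle_vertex_addn_neq a t : 0 < t < size c -> C (a + t) != C a.
Proof.
case/andP=> t0 tc; rewrite /C nth_uniq ?ltn_pmod //.
by rewrite -[X in _ == X %% _](addn0 a) eqn_modDl mod0n modn_small // -lt0n.
Qed.

Lemma cycle_vertex_nonbacktracking a t : nonbacktracking (fun i => C (a + i)) t.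
Proof. by move=> i _; rewrite -addn2 addnA cycle_vertex_addn_neq ?size_c_gt2. Qed.

End CycleVertices.

Section GirthCycle.

Variables (V : eqType) (adj : rel V) (d : V -> V -> nat) (c : seq V) (x0 : V).
Hypotheses (adj_sym : symmetric adj) (adj_irr : irreflexive adj).
Hypothesis dP : is_path_metric adj d.
Hypothesis c_cycle : is_graph_cycle adj c.

Local Notation C := (cycle_vertex c x0).

Lemma path_metric_cycle_vertex_le a t : d (C a) (C (a + t)) <= t.
Proof.
by have := path_metric_le dP (cycle_vertex_iwalk x0 c_cycle a (t := t)); rewrite addn0.
Qed.

Hypothesis c_girth : forall c', is_graph_cycle adj c' -> size c <= size c'.

(* A least counterexample t yields a geodesic that, appended to the cycle arc,
   closes a walk of length < 2t <= size c; it is nonbacktracking at the junction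
   by minimality of t, so it contains a cycle shorter than the girth. *)
Lemma girth_cycle_isometric a t : t.*2 <= size c -> d (C a) (C (a + t)) = t.
Proof.
elim/ltn_ind: t a => t IH a t2; apply/eqP.
rewrite eqn_leq path_metric_cycle_vertex_le leqNgt; apply/negP => dlt.
have dsym := path_metric_sym dP adj_sym.
have [f [f0 fm fw]] := path_metric_geodesic dP (C (a + t)) (C a).
move: fm fw; rewrite dsym; set m := d (C a) (C (a + t)) in dlt * => fm fw.
have t_gt0 : 0 < t by apply: leq_ltn_trans dlt.
have t_lt : t < size c by lia.
have m0 : 0 < m.
  have := cycle_vertex_addn_neq x0 c_cycle a (t := t).
  rewrite t_gt0 t_lt -f0 -fm => /(_ isT) fneq.
  by rewrite lt0n; apply: contraNneq fneq => ->.
have junction : f 1 != C (a + t.-1).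
  apply/eqP => f1.
  have fw' : iwalk adj (fun i => f i.+1) m.-1 by move=> i im; apply: fw; lia.
  have := path_metric_le dP fw'; rewrite /= f1 prednK // fm dsym IH; first by lia.
  - by rewrite ltn_predL.
  - by apply: leq_trans t2; rewrite leq_double leq_pred.
have [||||c' c'_cycle c'_size] :=
  closed_iwalk_cycle adj_irr (D := t + m) (w := concat_at (fun i => C (a + i)) f t).
- by lia.
- by apply: iwalk_concat; [apply: cycle_vertex_iwalk | apply: fw | rewrite f0].
- by rewrite /concat_at t_gt0 ltnNge leq_addr addKn fm addn0.
- apply: nonbacktracking_concat => [||| _ _ //].
  + exact: (cycle_vertex_nonbacktracking x0 c_cycle a).
  + by move=> i im; apply: (geodesic_nonbacktracking dP fw) => //; rewrite f0 fm dsym.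
  + by rewrite f0.
by have := c_girth c'_cycle; lia.
Qed.

Lemma even_girth_cycle_quadrangle k : size c = k.*2 ->
  uniq [:: C 0; C 1; C k; C k.+1] /\
  d (C 0) (C 1) + d (C 1) (C k) + d (C k) (C k.+1) + d (C k.+1) (C 0)
    <= d (C 0) (C k) + d (C 1) (C k.+1).
Proof.
move=> size_c; have k_ge2 : 2 <= k by case: c_cycle; rewrite size_c; lia.
split; first by rewrite /= !inE !(cycle_vertex_eq x0 c_cycle) ?size_c; lia.
have d01 : d (C 0) (C 1) <= 1 := path_metric_cycle_vertex_le 0 1.
have d12 : d (C 1) (C k) <= k - 1.
  by have := path_metric_cycle_vertex_le 1 (k - 1); rewrite subnKC // ltnW.
have d23 : d (C k) (C k.+1) <= 1 by rewrite -addn1; apply: path_metric_cycle_vertex_le.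
have d30 : d (C k.+1) (C 0) <= k - 1.
  rewrite -(cycle_vertex_size c x0) (_ : size c = k.+1 + (k - 1)).
    exact: path_metric_cycle_vertex_le.
  by rewrite size_c; lia.
have d02 : d (C 0) (C k) = k by apply: girth_cycle_isometric; rewrite size_c.
have d13 : d (C 1) (C k.+1) = k.
  by rewrite -add1n; apply: girth_cycle_isometric; rewrite size_c.
by rewrite d02 d13; lia.
Qed.

End GirthCycle.

Local Open Scope ring_scope.

Lemma quadrangle_not_cond_strict_neg_def (V : eqType) (d : V -> V -> nat)
    (v0 v1 v2 v3 : V) :
  (forall x y, d x y = d y x) -> (forall x, d x x = 0%N) ->
  uniq [:: v0; v1; v2; v3] ->
  (d v0 v1 + d v1 v2 + d v2 v3 + d v3 v0 <= d v0 v2 + d v1 v3)%N ->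
  ~ cond_strict_neg_def (fun x y => (d x y)%:R : CC).
Proof.
move=> dsym d0 vu dle dneg.
pose lam v : CC := (v == v0)%:R - (v == v1)%:R + (v == v2)%:R - (v == v3)%:R.
have := vu; rewrite /= !inE !negb_or /= andbT.
case/and3P=> /and3P[n01 n02 n03] /andP[n12 n13] n23.
have neqF := (negbTE n01, negbTE n02, negbTE n03, negbTE n12, negbTE n13, negbTE n23).
have lam0 : lam v0 = 1 by rewrite /lam eqxx !neqF /=; ring.
have lam1 : lam v1 = -1 by rewrite /lam eqxx eq_sym !neqF /=; ring.
have lam2 : lam v2 = 1 by rewrite /lam eqxx (eq_sym v2 v0) (eq_sym v2 v1) !neqF /=; ring.
have lam3 : lam v3 = -1 by rewrite /lam eqxx ![v3 == _]eq_sym !neqF /=; ring.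
have lam_supp v : v \notin [:: v0; v1; v2; v3] -> lam v = 0.
  rewrite !inE !negb_or => /and4P[/negbTE e0 /negbTE e1 /negbTE e2 /negbTE e3].
  by rewrite /lam e0 e1 e2 e3 /=; ring.
have lam_sum : \sum_(v <- [:: v0; v1; v2; v3]) lam v = 0.
  by rewrite !big_cons big_nil lam0 lam1 lam2 lam3; ring.
have lam_nz : exists v, lam v != 0 by exists v0; rewrite lam0 oner_neq0.
move: (dneg _ _ vu lam_supp lam_nz lam_sum); apply/negP; rewrite le_gtF //.
set F := \sum_(x <- _) _.
have -> : F = 2 * ((d v0 v2 + d v1 v3)%:R - (d v0 v1 + d v1 v2 + d v2 v3 + d v3 v0)%:R).
  rewrite /F !big_cons !big_nil lam0 lam1 lam2 lam3 conjC1 rmorphN1 !d0 !natrD.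
  rewrite (dsym v1 v0) (dsym v2 v0) (dsym v2 v1) (dsym v3 v1) (dsym v3 v2) (dsym v0 v3).
  ring.
by rewrite mulr_ge0 // subr_ge0 ler_nat.
Qed.

Theorem mainTheorem7 (V : eqType) (adj : rel V) (d : V -> V -> nat)
  (Hsimple : simple_graph adj) (Hconn : connected_graph adj)
  (Hd : is_path_metric adj d)
  (g : nat) (Hcyc : exists c, is_graph_cycle adj c /\ size c = g)
  (Hgirth : forall c, is_graph_cycle adj c -> (g <= size c)%N)
  (Heven : ~~ odd g) :
  ~ cond_strict_neg_def (fun x y => (d x y)%:R : CC).
Proof.
case: Hsimple => adj_sym adj_irr.
case: Hcyc => c [c_cycle ?]; subst g.
have x0 : V by case: c c_cycle {Hgirth Heven} => [[]|x].
have size_c : size c = ((size c)./2).*2.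
  by rewrite -[LHS]odd_double_half (negbTE Heven).
have [vu dle] := even_girth_cycle_quadrangle x0 adj_sym adj_irr Hd c_cycle Hgirth size_c.
apply: quadrangle_not_cond_strict_neg_def vu dle.
- exact: path_metric_sym.
- exact: path_metric_xx.
Qed.
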